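(* Let $\mathbb{X}=\ell_\infty^3$ and let $\mathbb{Y}$ be a two-dimensional strictly convex, smooth Banach space. Let $x_1=(1,1,1)$, $x_2=(-1,1,1)$, $x_3=(-1,-1,1)$, $x_4=(1,-1,1)$. Let $T\in\mathbb{L}(\mathbb{X},\mathbb{Y})$ with $\|T\|=1$ and $M_T\cap\operatorname{Ext}(B_{\mathbb{X}})=\{\pm x_1,\pm x_2,\pm x_3,\pm x_4\}$. Then: (i) if $\operatorname{Rank}(T)=1$, then $T$ is $3$-smooth; (ii) if $\operatorname{Rank}(T)=2$, then $T$ is $4$-smooth.
   Context: $\mathbb{L}(\mathbb{X},\mathbb{Y})$ is the space of linear operators with the operator norm. $B_{\mathbb{X}}$ is the closed unit ball, $\operatorname{Ext}$ its set of extreme points, $M_T=\{x\in\mathbb{X}:\|x\|=1,\ \|Tx\|=\|T\|\}$. A Banach space is strictly convex if its unit sphere contains no nontrivial line segment, and smooth if every unit vector has a unique norm-one supporting functional. For a Banach space $\mathbb{Z}$ and a unit vector $z$, $J(z)=\{f\in \mathbb{Z}^*:\|f\|=1,\ f(z)=1\}$; $z$ is $k$-smooth if $\dim\operatorname{span} J(z)=k$ ($T$ considered in the unit sphere of $\mathbb{L}(\mathbb{X},\mathbb{Y})$). *)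

From HB Require Import structures.
From mathcomp Require Import all_boot all_order all_algebra.
From mathcomp Require Import boolp classical_sets reals.
Set Implicit Arguments. Unset Strict Implicit. Unset Printing Implicit Defensive.
Import Order.TTheory GRing.Theory Num.Theory.
Local Open Scope ring_scope.
Local Open Scope classical_set_scope.

Section Defs.
Variable R : realType.

Definition supn n (x : 'rV[R]_n) : R := \big[Num.max/0]_(i < n) `|x 0 i|.

Definition is_norm n (N : 'rV[R]_n -> R) : Prop :=
  (forall x, N x = 0 -> x = 0) /\
  (forall (a : R) x, N (a *: x) = `|a| * N x) /\
  (forall x y, N (x + y) <= N x + N y).

(* operators X = l_infty^3 -> Y = (R^2, N) are 3x2 matrices acting by x |-> x *m T *)
Definition opnorm (N : 'rV[R]_2 -> R) (T : 'M[R]_(3, 2)) : R :=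
  sup [set N (x *m T) | x in [set x : 'rV[R]_3 | supn x <= 1]].

(* functionals on Y : g : 'rV_2, acting by the standard pairing *)
Definition pairY (g y : 'rV[R]_2) : R := \sum_(i < 2) g 0 i * y 0 i.
Definition dualnormY (N : 'rV[R]_2 -> R) (g : 'rV[R]_2) : R :=
  sup [set `|pairY g y| | y in [set y | N y <= 1]].

Definition strictly_convex (N : 'rV[R]_2 -> R) : Prop :=
  forall x y, N x = 1 -> N y = 1 ->
    (forall t : R, 0 <= t <= 1 -> N ((1 - t) *: x + t *: y) = 1) -> x = y.

Definition smooth (N : 'rV[R]_2 -> R) : Prop :=
  forall y, N y = 1 -> forall g1 g2,
    dualnormY N g1 = 1 -> pairY g1 y = 1 ->
    dualnormY N g2 = 1 -> pairY g2 y = 1 -> g1 = g2.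

(* functionals on L(X,Y) = 'M_(3,2): F acting by the trace pairing *)
Definition pairL (F S : 'M[R]_(3, 2)) : R := \sum_(i < 3) \sum_(j < 2) F i j * S i j.
Definition dualnormL (N : 'rV[R]_2 -> R) (F : 'M[R]_(3, 2)) : R :=
  sup [set `|pairL F S| | S in [set S | opnorm N S <= 1]].

Definition Jset (N : 'rV[R]_2 -> R) (T : 'M[R]_(3, 2)) : set 'M[R]_(3, 2) :=
  [set F | dualnormL N F = 1 /\ pairL F T = 1].

(* dim span S = k : S contains k linearly independent elements spanning S *)
Definition span_dim (S : set 'M[R]_(3, 2)) (k : nat) : Prop :=
  exists B : 'M[R]_(k, 3 * 2),
    (forall i, S (vec_mx (row i B))) /\ row_free B /\
    (forall F, S F -> (mxvec F <= B)%MS).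

Definition ksmooth (N : 'rV[R]_2 -> R) (T : 'M[R]_(3, 2)) (k : nat) : Prop :=
  span_dim (Jset N T) k.

Definition MT (N : 'rV[R]_2 -> R) (T : 'M[R]_(3, 2)) : set 'rV[R]_3 :=
  [set x | supn x = 1 /\ N (x *m T) = opnorm N T].

Definition ext_ball (x : 'rV[R]_3) : Prop :=
  supn x <= 1 /\
  forall y z (t : R), supn y <= 1 -> supn z <= 1 -> 0 < t < 1 ->
    x = (1 - t) *: y + t *: z -> y = z.

Definition mk3 (a b c : R) : 'rV[R]_3 := \row_(i < 3) [:: a; b; c]`_i.
Definition x1 := mk3 1 1 1.
Definition x2 := mk3 (-1) 1 1.
Definition x3 := mk3 (-1) (-1) 1.
Definition x4 := mk3 1 (-1) 1.

End Defs.

From HB Require Import structures.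
From mathcomp Require Import all_boot all_order all_algebra.
From mathcomp Require Import boolp classical_sets reals.
From mathcomp Require Import lra ring.

Set Implicit Arguments.
Unset Strict Implicit.
Unset Printing Implicit Defensive.
Import Order.TTheory GRing.Theory Num.Theory.
Local Open Scope ring_scope.
Local Open Scope classical_set_scope.

(* Let y_k = x_k T and let g_k be a supporting functional of the unit vector
   y_k.  The operators F_k : S |-> g_k (x_k S) lie in J(T).  Conversely every
   F in J(T) vanishes on the common kernel of the F_k: the norm of T + s S is
   attained at the vertices +-x_k, and by smoothness s |-> |y_k + s x_k S| has
   derivative g_k (x_k S) = 0 at s = 0, so F(T + s S) = 1 + s F(S) is at most
   1 + o(s) for both signs of s.  Hence span J(T) = span {F_k}.  If
   rank T = 1, every y_k is +-y_1, so g_k = +-g_1 and F_4 is a combination of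
   the independent F_1, F_2, F_3.  If rank T = 2, a linear dependence among the
   F_k would make g_2 and g_3 multiples of g_1, and strict convexity would then
   force y_2, y_3 = +-y_1, i.e. rank T <= 1. *)

Section SmallOrdinals.
Variable V : nmodType.

Lemma big_ord2 (f : 'I_2 -> V) : \sum_i f i = f 0 + f 1.
Proof. by rewrite !big_ord_recl big_ord0 addr0; congr (f _ + f _); apply: val_inj. Qed.

Lemma big_ord3 (f : 'I_3 -> V) : \sum_i f i = f 0 + f 1 + f 2.
Proof.
by rewrite !big_ord_recl big_ord0 addr0 addrA; congr (f _ + f _ + f _); apply: val_inj.
Qed.

Lemma big_ord4 (f : 'I_4 -> V) : \sum_i f i = f 0 + f 1 + f 2 + f 3.
Proof.
rewrite !big_ord_recl big_ord0 addr0 !addrA.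
by congr (f _ + f _ + f _ + f _); apply: val_inj.
Qed.

End SmallOrdinals.

Lemma ord2P (j : 'I_2) : j = 0 \/ j = 1.
Proof. by case: j => [[|[|//]] lt]; [left|right]; apply: val_inj. Qed.

Lemma ord3P (i : 'I_3) : [\/ i = 0, i = 1 | i = 2].
Proof.
case: i => [[|[|[|//]]] lt]; [apply: Or31|apply: Or32|apply: Or33]; exact: val_inj.
Qed.

Lemma ord4P (k : 'I_4) : [\/ k = 0, k = 1, k = 2 | k = 3].
Proof.
case: k => [[|[|[|[|//]]]] lt];
  [apply: Or41|apply: Or42|apply: Or43|apply: Or44]; exact: val_inj.
Qed.

Lemma sup_max (R : realType) (E : set R) a : E a -> ubound E a -> sup E = a.
Proof.
move=> Ea ub; apply/le_anti/andP; split; first by apply: ge_sup => //; exists a.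
by apply: ub_le_sup => //; exists a.
Qed.

Lemma normr_eq1 (R : realDomainType) (a : R) : `|a| = 1 -> a = 1 \/ a = -1.
Proof. by move/eqP; rewrite eqr_norml ler01 andbT => /orP[] /eqP; [left|right]. Qed.

Lemma scaler_eq_div (K : fieldType) (V : lmodType K) (a b : K) (u v : V) :
  b != 0 -> v != 0 -> a *: u = b *: v -> u = (b / a) *: v.
Proof.
move=> b_neq0 v_neq0 e; have a_neq0 : a != 0.
  by apply: contra_eq_neq e => ->; rewrite scale0r eq_sym scaler_eq0 negb_or b_neq0.
by rewrite mulrC -scalerA -e scalerA mulVf ?scale1r.
Qed.

Section Norm.
Variables (R : realType) (n : nat) (N : 'rV[R]_n -> R).
Hypothesis hN : is_norm N.

Lemma normZ a x : N (a *: x) = `|a| * N x.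
Proof. by case: hN => _ []. Qed.

Lemma normD x y : N (x + y) <= N x + N y.
Proof. by case: hN => _ []. Qed.

Lemma norm0 : N 0 = 0.
Proof. by rewrite -(scale0r 0) normZ normr0 mul0r. Qed.

Lemma normN x : N (- x) = N x.
Proof. by rewrite -scaleN1r normZ normrN1 mul1r. Qed.

Lemma norm_ge0 x : 0 <= N x.
Proof. by have := normD x (- x); rewrite subrr norm0 normN; lra. Qed.

Lemma normZ_ge0 a x : 0 <= a -> N (a *: x) = a * N x.
Proof. by move=> a_ge0; rewrite normZ ger0_norm. Qed.

Lemma norm_convex a b x y : 0 <= a -> 0 <= b ->
  N (a *: x + b *: y) <= a * N x + b * N y.
Proof. by move=> a_ge0 b_ge0; rewrite -(normZ_ge0 x a_ge0) -(normZ_ge0 y b_ge0) normD. Qed.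

Lemma norm_segment_le u r a M :
  (forall s, s = 1 \/ s = -1 -> N (u + s *: r) <= M) -> `|a| <= 1 ->
  N (u + a *: r) <= M.
Proof.
move=> le_ends; rewrite ler_norml => /andP[a_ge a_le].
have -> : u + a *: r = ((1 + a) / 2) *: (u + 1 *: r) + ((1 - a) / 2) *: (u + (-1) *: r).
  by apply/rowP => j; rewrite !mxE; field.
have wp : 0 <= (1 + a) / 2 by lra.
have wm : 0 <= (1 - a) / 2 by lra.
apply: le_trans (norm_convex _ _ wp wm) _.
have := le_ends 1 (or_introl erefl); have := le_ends (-1) (or_intror erefl); nra.
Qed.

End Norm.

Section SupNorm.
Variables (R : realType) (n : nat).
Implicit Type x : 'rV[R]_n.

Lemma supn_ge x i : `|x 0 i| <= supn x.
Proof. exact: le_bigmax. Qed.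

Lemma supn_le x M : 0 <= M -> (forall i, `|x 0 i| <= M) -> supn x <= M.
Proof. by move=> M_ge0 le_M; apply: bigmax_le. Qed.

End SupNorm.

Section Cube.
Variables (R : realType) (n : nat).

(* Up to sign, the vertices of the unit ball of l_infty^3. *)
Definition vertex (k : 'I_4) : 'rV[R]_3 := [:: x1 R; x2 R; x3 R; x4 R]`_k.

Lemma supn_vertex k : supn (vertex k) <= 1.
Proof.
apply: supn_le => // i.
have [->|->|->|->] := ord4P k; rewrite /= mxE;
  by have [->|->|->] := ord3P i; rewrite ?normrN normr1.
Qed.

Lemma mk3E (x : 'rV[R]_3) : x = mk3 (x 0 0) (x 0 1) (x 0 2).
Proof. by apply/rowP => i; rewrite mxE; have [->|->|->] := ord3P i. Qed.

Lemma mulmx_mk3 a b c (A : 'M[R]_(3, n)) :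
  mk3 a b c *m A = a *: row 0 A + b *: row 1 A + c *: row 2 A.
Proof. by apply/rowP => j; rewrite !mxE big_ord3 !mxE. Qed.

Lemma cube_bound (N : 'rV[R]_n -> R) (A : 'M[R]_(3, n)) M : is_norm N ->
  (forall k, N (vertex k *m A) <= M) -> forall x, supn x <= 1 -> N (x *m A) <= M.
Proof.
move=> hN le_vertex x x_le1.
pose E a b c := a *: row 0 A + b *: row 1 A + c *: row 2 A.
have at_vertex a b : a = 1 \/ a = -1 -> b = 1 \/ b = -1 -> N (E a b 1) <= M.
  by rewrite /E -mulmx_mk3 => -[] -> [] ->;
    [exact: (le_vertex 0)|exact: (le_vertex 3)|exact: (le_vertex 1)|exact: (le_vertex 2)].
have at_sign a b c :
    a = 1 \/ a = -1 -> b = 1 \/ b = -1 -> c = 1 \/ c = -1 -> N (E a b c) <= M.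
  move=> ha hb [->|->]; first exact: at_vertex.
  have -> : E a b (-1) = - E (- a) (- b) 1 by apply/rowP => j; rewrite !mxE; ring.
  rewrite (normN hN); apply: at_vertex; [case: ha|case: hb] => ->;
    rewrite ?opprK; by [left|right].
have coord_le1 i : `|x 0 i| <= 1 := le_trans (supn_ge x i) x_le1.
rewrite [x]mk3E mulmx_mk3.
(* Move the coordinates to +-1 one at a time, by convexity along each. *)
apply: (norm_segment_le hN) (coord_le1 2) => c hc.
rewrite addrAC; apply: (norm_segment_le hN) (coord_le1 1) => b hb; rewrite addrAC.
rewrite -addrA addrC; apply: (norm_segment_le hN) (coord_le1 0) => a ha.
by rewrite [X in N X]addrC addrA; apply: at_sign.
Qed.

Lemma rank_le1_of_vertex_rows (T : 'M[R]_(3, n)) a b :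
  vertex 1 *m T = a *: (vertex 0 *m T) -> vertex 2 *m T = b *: (vertex 0 *m T) ->
  (\rank T <= 1)%N.
Proof.
move=> e1 e2.
(* e_1 = (x_1 - x_2) / 2, e_2 = (x_2 - x_3) / 2 and e_3 = (x_1 + x_3) / 2. *)
pose u : 'cV[R]_3 := \col_i [:: (1 - a) / 2; (a - b) / 2; (1 + b) / 2]`_i.
suff -> : T = u *m (vertex 0 *m T).
  exact: leq_trans (mxrankM_maxr _ _) (rank_leq_row _).
apply/matrixP => i j; move/rowP/(_ j): e1; move/rowP/(_ j): e2.
rewrite !(mxE, big_ord3, big_ord1) /=.
by have [->|->|->] := ord3P i => /= e2 e1; lra.
Qed.

Lemma vertex3E : vertex 3 = vertex 0 - vertex 1 + vertex 2.
Proof. by apply/rowP => i; rewrite !mxE; have [->|->|->] := ord3P i; rewrite /=; ring. Qed.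

Lemma outer_vertex_rel (h0 h1 h2 h3 : 'rV[R]_n) :
  (vertex 0)^T *m h0 + (vertex 1)^T *m h1 + (vertex 2)^T *m h2 + (vertex 3)^T *m h3 = 0 ->
  [/\ h1 = - h0, h2 = h0 & h3 = - h0].
Proof.
move=> /matrixP e.
split; apply/rowP => j; move: (e 0 j) (e 1 j) (e 2 j); rewrite !(mxE, big_ord1) /=; lra.
Qed.

End Cube.


Section Plane.
Variable R : realType.
Implicit Types (a b c : R) (g u v w y : 'rV[R]_2).

Lemma rV2P u w : u 0 0 = w 0 0 -> u 0 1 = w 0 1 -> u = w.
Proof. by move=> e0 e1; apply/rowP => j; have [->|->] := ord2P j. Qed.

Lemma pairYE g y : pairY g y = g 0 0 * y 0 0 + g 0 1 * y 0 1.
Proof. exact: big_ord2. Qed.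

Lemma pairYD g y z : pairY g (y + z) = pairY g y + pairY g z.
Proof. by rewrite !pairYE !mxE; ring. Qed.

Lemma pairYZ g a y : pairY g (a *: y) = a * pairY g y.
Proof. by rewrite !pairYE !mxE; ring. Qed.

Lemma pairYN g y : pairY g (- y) = - pairY g y.
Proof. by rewrite -scaleN1r pairYZ mulN1r. Qed.

Lemma pairZY a g y : pairY (a *: g) y = a * pairY g y.
Proof. by rewrite !pairYE !mxE; ring. Qed.

Lemma pairY_self_neq0 u : u != 0 -> pairY u u != 0.
Proof.
apply: contra_neq => /eqP; rewrite pairYE -!expr2 paddr_eq0 ?sqr_ge0 // !sqrf_eq0.
by case/andP => /eqP u0 /eqP u1; apply: rV2P; rewrite !mxE.
Qed.

Definition cross u w := u 0 0 * w 0 1 - u 0 1 * w 0 0.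

Lemma cross_decomp u w y : cross u w != 0 ->
  y = (cross y w / cross u w) *: u + (cross u y / cross u w) *: w.
Proof. by rewrite /cross => uw; apply: rV2P; rewrite !mxE; field. Qed.

Lemma cross_eq0 u w : u != 0 -> cross u w = 0 -> exists a, w = a *: u.
Proof.
move=> /pairY_self_neq0 uu uw; exists (pairY u w / pairY u u).
apply: rV2P; rewrite !mxE mulrAC; apply: (mulIf uu); rewrite divfK // !pairYE.
- apply/eqP; rewrite -subr_eq0 -(mulr0 (- u 0 1)) -uw /cross.
  by apply/eqP; ring.
- apply/eqP; rewrite -subr_eq0 -(mulr0 (u 0 0)) -uw /cross.
  by apply/eqP; ring.
Qed.

Lemma cross_rank_le1 m (T : 'M[R]_(m, 2)) (x y : 'rV[R]_m) :
  (\rank T <= 1)%N -> cross (x *m T) (y *m T) = 0.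
Proof.
move=> rankT; have [->|xT_neq0] := eqVneq (x *m T) 0; first by rewrite /cross !mxE; ring.
have /sub_rVP[a ->] : (y *m T <= x *m T)%MS.
  apply: submx_trans (submxMl y T) _.
  rewrite -(mxrank_leqif_sup (submxMl x T)).2 eqn_leq mxrankM_maxr rank_rV xT_neq0.
  exact: leq_trans rankT _.
by rewrite /cross !mxE; ring.
Qed.

End Plane.

Definition supporting (R : realType) (N : 'rV[R]_2 -> R) (v g : 'rV[R]_2) :=
  pairY g v = 1 /\ forall y, pairY g y <= N y.

Definition rderiv (R : realType) (N : 'rV[R]_2 -> R) (v w : 'rV[R]_2) :=
  inf [set (N (v + s *: w) - N v) / s | s in [set s : R | 0 < s]].

Section Support.
Variables (R : realType) (N : 'rV[R]_2 -> R).
Hypothesis hN : is_norm N.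
Implicit Types (a b c d s t : R) (g u v w y : 'rV[R]_2).

Lemma norm1_neq0 v : N v = 1 -> v != 0.
Proof. by apply: contra_eq_neq => ->; rewrite (norm0 hN) eq_sym oner_neq0. Qed.

Lemma supporting_abs v g : supporting N v g -> forall y, `|pairY g y| <= N y.
Proof.
case=> _ g_le y; rewrite ler_norml g_le andbT lerNl -pairYN -(normN hN y).
exact: g_le.
Qed.

Lemma supporting_neq0 v g : supporting N v g -> g != 0.
Proof.
case=> gv _; apply: contra_eq_neq gv => ->.
by rewrite pairYE !mxE !mul0r addr0 eq_sym oner_neq0.
Qed.

Lemma supportingN v g : supporting N v g -> supporting N (- v) (- g).
Proof.
case=> gv g_le; rewrite -!scaleN1r; split; first by rewrite pairZY pairYZ gv; lra.
by move=> y; rewrite pairZY mulN1r -pairYN -(normN hN); apply: g_le.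
Qed.

Lemma supporting_dualnorm v g : N v = 1 -> supporting N v g -> dualnormY N g = 1.
Proof.
move=> v1 g_supp; apply: sup_max.
  by exists v; rewrite /= ?v1 ?(proj1 g_supp) ?normr1.
by move=> _ [y /= y_le1 <-]; apply: le_trans (supporting_abs g_supp y) y_le1.
Qed.

Lemma smooth_supporting_eq v g g' : smooth N -> N v = 1 ->
  supporting N v g -> supporting N v g' -> g = g'.
Proof.
move=> smN v1 sg sg'; apply: (smN v v1); rewrite ?(proj1 sg) ?(proj1 sg') //;
  exact: supporting_dualnorm v1 _.
Qed.

Lemma sconvex_supporting_eq v u g : strictly_convex N -> N v = 1 -> N u = 1 ->
  supporting N v g -> pairY g u = 1 -> u = v.
Proof.
move=> scN v1 u1 [gv g_le] gu; apply: scN => // t /andP[t_ge0 t_le1].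
apply/le_anti/andP; split.
  have t'_ge0 : 0 <= 1 - t by lra.
  by apply: le_trans (norm_convex hN _ _ t'_ge0 t_ge0) _; rewrite u1 v1; lra.
by have := g_le ((1 - t) *: u + t *: v); rewrite pairYD !pairYZ gv gu; lra.
Qed.

Lemma sconvex_supporting_parallel v v' g a : strictly_convex N -> N v = 1 -> N v' = 1 ->
  supporting N v g -> supporting N v' (a *: g) -> v' = v \/ v' = - v.
Proof.
move=> scN v1 v'1 sg sg'.
have agv' : a * pairY g v' = 1 by rewrite -pairZY (proj1 sg').
have a_le1 : `|a| <= 1.
  by have := supporting_abs sg' v; rewrite pairZY (proj1 sg) mulr1 v1.
have a_ge1 : 1 <= `|a|.
  have := supporting_abs sg v'; rewrite v'1 => gv'_le1.
  by rewrite -(normr1 R) -agv' normrM ler_piMr.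
have a1 : `|a| = 1 by apply/le_anti; rewrite a_le1 a_ge1.
have av' : a *: v' = v.
  apply: sconvex_supporting_eq scN v1 _ sg _; last by rewrite pairYZ.
  by rewrite (normZ hN) a1 v'1 mulr1.
by case: (normr_eq1 a1) => a_eq; [left|right]; rewrite -av' a_eq ?scale1r ?scaleN1r ?opprK.
Qed.

Lemma chord_slope_le v w s t : 0 < s -> 0 < t ->
  (N v - N (v - t *: w)) / t <= (N (v + s *: w) - N v) / s.
Proof.
move=> s_gt0 t_gt0.
have := norm_convex hN (v + s *: w) (v - t *: w) (ltW t_gt0) (ltW s_gt0).
have -> : t *: (v + s *: w) + s *: (v - t *: w) = (s + t) *: v.
  by apply/rowP => j; rewrite !mxE; ring.
have st_ge0 : 0 <= s + t by rewrite addr_ge0 // ltW.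
rewrite (normZ_ge0 hN _ st_ge0) => conv.
by rewrite ler_pdivrMr // mulrAC ler_pdivlMr //; nra.
Qed.

Lemma norm_le_of_chord v w d s0 s : 0 < s <= s0 ->
  N (v + s0 *: w) <= N v + s0 * d -> N (v + s *: w) <= N v + s * d.
Proof.
case/andP=> s_gt0 s_le chord; have s0_gt0 := lt_le_trans s_gt0 s_le.
set l := s / s0; have sE : s = l * s0 by rewrite divfK ?lt0r_neq0.
have l_ge0 : 0 <= l by rewrite divr_ge0 ?ltW.
have l'_ge0 : 0 <= 1 - l by rewrite subr_ge0 ler_pdivrMr // mul1r.
have := norm_convex hN v (v + s0 *: w) l'_ge0 l_ge0.
have -> : (1 - l) *: v + l *: (v + s0 *: w) = v + s *: w.
  by rewrite sE; apply/rowP => j; rewrite !mxE; ring.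
by rewrite sE; nra.
Qed.

Lemma rderiv_le_norm v w s : N v + s * rderiv N v w <= N (v + s *: w).
Proof.
rewrite /rderiv; set Q := [set _ | _ in _].
have Q_lb t : 0 < t -> lbound Q ((N v - N (v - t *: w)) / t).
  by move=> t_gt0 _ [s' /= s'_gt0 <-]; apply: chord_slope_le.
have Q0 : Q !=set0.
  by exists ((N (v + 1 *: w) - N v) / 1); rewrite /Q; exists 1; rewrite //= ltr01.
have [s_gt0|s_lt0|<-] := ltgtP 0 s; last by rewrite mul0r scale0r !addr0.
- have : inf Q <= (N (v + s *: w) - N v) / s.
    apply: ge_inf; last by rewrite /Q; exists s.
    by exists ((N v - N (v - 1 *: w)) / 1); apply: Q_lb.
  by rewrite ler_pdivlMr //; nra.
- have : (N v - N (v - (- s) *: w)) / (- s) <= inf Q.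
    by apply: lb_le_inf Q0 (Q_lb _ _); rewrite oppr_gt0.
  by rewrite ler_pdivrMr ?oppr_gt0 // scaleNr opprK; nra.
Qed.

Lemma rderiv_lt v w d : rderiv N v w < d ->
  exists2 s0, 0 < s0 & forall s, 0 < s <= s0 -> N (v + s *: w) <= N v + s * d.
Proof.
rewrite /rderiv => /inf_lt[|_ [s0 /= s0_gt0 <-]].
  by exists ((N (v + 1 *: w) - N v) / 1); exists 1; rewrite //= ltr01.
rewrite ltr_pdivrMr // => chord; exists s0 => // s s_in.
by apply: norm_le_of_chord s_in _; lra.
Qed.

Lemma supporting_of_tangent v w c : N v = 1 -> cross v w != 0 ->
  (forall s, N v + s * c <= N (v + s *: w)) ->
  exists2 g, supporting N v g & pairY g w = c.
Proof.
move=> v1 vw line_le; rewrite v1 in line_le.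
(* The functional with [g v = 1] and [g w = c], by Cramer's rule. *)
pose g : 'rV[R]_2 :=
  \row_j [:: (w 0 1 - c * v 0 1) / cross v w; (c * v 0 0 - w 0 0) / cross v w]`_j.
have gE y : pairY g y = cross y w / cross v w + cross v y / cross v w * c.
  by rewrite pairYE !mxE /cross /=; field.
exists g; last by rewrite gE /cross; field.
split; first by rewrite gE /cross; field.
move=> y; rewrite gE; set a := _ / _; set b := _ / _.
have yE : y = a *: v + b *: w := cross_decomp y vw.
have [a_le1|a_gt1] := lerP a 1.
- have := normD hN y ((1 - a) *: v).
  have -> : y + (1 - a) *: v = v + b *: w by rewrite yE; apply/rowP => j; rewrite !mxE; ring.
  rewrite (normZ_ge0 hN) ?subr_ge0 // v1.
  by have := line_le b; lra.
- have a_gt0 : 0 < a by lra.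
  have a_neq0 : a != 0 by rewrite lt0r_neq0.
  have -> : y = a *: (v + (b / a) *: w).
    by rewrite yE; apply/rowP => j; rewrite !mxE; field.
  have -> : a + b * c = a * (1 + b / a * c) by field.
  by rewrite (normZ_ge0 hN _ (ltW a_gt0)) ler_pM2l.
Qed.

Lemma cross_eq0_norm1 v v' : N v = 1 -> N v' = 1 -> cross v v' = 0 ->
  v' = v \/ v' = - v.
Proof.
move=> v1 v'1 /(cross_eq0 (norm1_neq0 v1))[a v'E].
have : `|a| = 1 by rewrite -v'1 v'E (normZ hN) v1 mulr1.
by case/normr_eq1 => a_eq; [left|right]; rewrite v'E a_eq ?scale1r ?scaleN1r.
Qed.

Lemma supporting_exists v : N v = 1 -> exists g, supporting N v g.
Proof.
move=> v1; pose w : 'rV[R]_2 := \row_j [:: - v 0 1; v 0 0]`_j.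
have vw : cross v w != 0.
  have -> : cross v w = pairY v v by rewrite /cross pairYE !mxE /=; ring.
  exact/pairY_self_neq0/norm1_neq0.
by have [g sg _] := supporting_of_tangent v1 vw (rderiv_le_norm v w); exists g.
Qed.

Lemma tangent_norm_le v g w d : smooth N -> N v = 1 -> supporting N v g ->
  pairY g w = 0 -> 0 < d ->
  exists2 s0, 0 < s0 & forall s, 0 < s <= s0 -> N (v + s *: w) <= 1 + s * d.
Proof.
move=> smN v1 sg gw d_gt0; rewrite -v1.
have [->|w_neq0] := eqVneq w 0.
  by exists 1 => // s /andP[s_gt0 _]; rewrite scaler0 addr0 lerDl mulr_ge0 // ltW.
apply: rderiv_lt.
have vw : cross v w != 0.
  apply: contra_neq w_neq0 => /(cross_eq0 (norm1_neq0 v1))[a wE].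
  by move: gw; rewrite wE pairYZ (proj1 sg) mulr1 => ->; rewrite scale0r.
(* Smoothness identifies [g] with the functional given by the right derivative. *)
have [g' sg' g'w] := supporting_of_tangent v1 vw (rderiv_le_norm v w).
by rewrite -g'w (smooth_supporting_eq smN v1 sg' sg) gw.
Qed.

Lemma smooth_supporting_sign v v' g g' : smooth N -> N v = 1 -> N v' = 1 ->
  cross v v' = 0 -> supporting N v g -> supporting N v' g' ->
  exists2 s : R, s = 1 \/ s = -1 & g' = s *: g.
Proof.
move=> smN v1 v'1 vv' sg sg'.
case: (cross_eq0_norm1 v1 v'1 vv') => v'E.
  exists 1; [by left | rewrite scale1r].
  by apply: (smooth_supporting_eq smN v'1); rewrite // v'E.
exists (-1); [by right | rewrite scaleN1r].
by apply: (smooth_supporting_eq smN v'1); rewrite // v'E; apply: supportingN.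
Qed.

End Support.

Section Operators.
Variable R : realType.
Implicit Types (F A S : 'M[R]_(3, 2)) (x : 'rV[R]_3) (g : 'rV[R]_2).

Lemma pairLD F A S : pairL F (A + S) = pairL F A + pairL F S.
Proof.
rewrite /pairL -big_split; apply: eq_bigr => i _; rewrite -big_split.
by apply: eq_bigr => j _; rewrite !mxE mulrDr.
Qed.

Lemma pairLZ F a A : pairL F (a *: A) = a * pairL F A.
Proof.
rewrite /pairL mulr_sumr; apply: eq_bigr => i _; rewrite mulr_sumr.
by apply: eq_bigr => j _; rewrite !mxE mulrCA.
Qed.

Lemma pairLN F A : pairL F (- A) = - pairL F A.
Proof. by rewrite -scaleN1r pairLZ mulN1r. Qed.

Lemma pairL_outer x g S : pairL (x^T *m g) S = pairY g (x *m S).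
Proof.
rewrite /pairL /pairY exchange_big; apply: eq_bigr => j _.
rewrite mxE mulr_sumr; apply: eq_bigr => i _.
by rewrite !mxE big_ord1 !mxE mulrCA mulrA.
Qed.

Lemma pairL_vec_mx F n (C : 'M[R]_(3 * 2, n)) j :
  pairL F (vec_mx (\row_k C k j)) = (mxvec F *m C) 0 j.
Proof.
rewrite /pairL mxE (reindex (uncurry (@mxvec_index 3 2))) /=; last exact: curry_mxvec_bij.
rewrite pair_bigA; apply: eq_bigr => [[i l]] _ /=.
by rewrite mxvecE !mxE.
Qed.

Lemma span_dim_annihilator n (Fs : 'I_n -> 'M[R]_(3, 2)) (J : set 'M[R]_(3, 2)) :
  (forall k, J (Fs k)) ->
  (forall c : 'rV[R]_n, \sum_k c 0 k *: Fs k = 0 -> c = 0) ->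
  (forall F, J F -> forall S, (forall k, pairL (Fs k) S = 0) -> pairL F S = 0) ->
  span_dim J n.
Proof.
move=> FsJ Fs_free annihilated.
pose B : 'M[R]_(n, 3 * 2) := \matrix_k mxvec (Fs k).
exists B; split; first by move=> k; rewrite rowK mxvecK.
split.
  apply/inj_row_free => c; rewrite mulmx_sum_row => cB0; apply: Fs_free.
  apply: (can_inj mxvecK); rewrite linear_sum linear0 -[RHS]cB0.
  by apply: eq_bigr => k _; rewrite rowK linearZ.
move=> F JF; rewrite submxE; apply: contraT => /rV0Pn[j /negbTE <-].
rewrite -pairL_vec_mx; apply/eqP/annihilated => // k.
by rewrite pairL_vec_mx -(rowK (fun k => mxvec (Fs k))) -row_mul mulmx_coker row0 mxE.
Qed.

End Operators.

Section OperatorNorm.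
Variables (R : realType) (N : 'rV[R]_2 -> R).
Hypothesis hN : is_norm N.
Implicit Types (F A T : 'M[R]_(3, 2)) (x : 'rV[R]_3) (g : 'rV[R]_2).

Lemma opnorm_ge A x : supn x <= 1 -> N (x *m A) <= opnorm N A.
Proof.
move=> x_le1; apply: ub_le_sup; last by exists x.
exists (\sum_k N (vertex R k *m A)) => _ [y /= y_le1 <-].
apply: (cube_bound hN) y_le1 => k.
by rewrite (bigD1 k) //= lerDl sumr_ge0 // => i _; apply: norm_ge0.
Qed.

Lemma opnorm_le A M : (forall x, supn x <= 1 -> N (x *m A) <= M) -> opnorm N A <= M.
Proof.
move=> le_M; apply: ge_sup => [|_ [x /= x_le1 <-]]; last exact: le_M.
by exists (N (0 *m A)); exists 0; rewrite //= supn_le // => i; rewrite mxE normr0.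
Qed.

Lemma pairL_le F A l : dualnormL N F = 1 -> 0 < l -> opnorm N A <= l ->
  pairL F A <= l.
Proof.
rewrite /dualnormL; set E := (X in sup X) => F1 l_gt0 A_le.
have E_sup : has_sup E by apply: contrapT => /sup_out; rewrite F1 => /eqP; rewrite oner_eq0.
have l'_ge0 : 0 <= l^-1 by rewrite invr_ge0 ltW.
have : `|pairL F (l^-1 *: A)| <= 1.
  rewrite -F1; apply: (ub_le_sup (proj2 E_sup)); exists (l^-1 *: A) => //=.
  apply: opnorm_le => x x_le1; rewrite -scalemxAr (normZ_ge0 hN _ l'_ge0).
  by rewrite ler_pdivrMl // mulr1 (le_trans (opnorm_ge _ x_le1)).
rewrite pairLZ normrM ger0_norm // ler_pdivrMl // mulr1.
exact: le_trans (ler_norm _).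
Qed.

Lemma outer_in_Jset T x g : supn x <= 1 -> opnorm N T = 1 ->
  supporting N (x *m T) g -> Jset N T (x^T *m g).
Proof.
move=> x_le1 T1 sg; split; last by rewrite pairL_outer (proj1 sg).
apply: sup_max; first by exists T; rewrite /= ?T1 // pairL_outer (proj1 sg) normr1.
move=> _ [S /= S_le1 <-]; rewrite pairL_outer.
exact: le_trans (supporting_abs hN sg _) (le_trans (opnorm_ge _ x_le1) S_le1).
Qed.

End OperatorNorm.

Section Corollary.
Variables (R : realType) (N : 'rV[R]_2 -> R) (T : 'M[R]_(3, 2)) (g : 'I_4 -> 'rV[R]_2).
Hypotheses (hN : is_norm N) (smN : smooth N) (T1 : opnorm N T = 1).
Hypothesis vertex_norm : forall k, N (vertex R k *m T) = 1.
Hypothesis g_supp : forall k, supporting N (vertex R k *m T) (g k).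

Local Notation F k := ((vertex R k)^T *m g k).

Lemma F_in_Jset k : Jset N T (F k).
Proof. exact: (outer_in_Jset hN (supn_vertex R k) T1 (g_supp k)). Qed.

Lemma scale_g_eq0 k a : a *: g k = 0 -> a = 0.
Proof.
by move/eqP; rewrite scaler_eq0 (negbTE (supporting_neq0 (g_supp k))) orbF => /eqP.
Qed.

Lemma Jset_pairL_le0 G S : Jset N T G ->
  (forall k, pairY (g k) (vertex R k *m S) = 0) -> pairL G S <= 0.
Proof.
move=> [G1 GT] tangent; apply/ler_addgt0Pr => d d_gt0; rewrite add0r.
have /fin_all_exists2[s0 s0_gt0 s0_le] : forall k, exists2 s0, 0 < s0 &
    forall s, 0 < s <= s0 -> N (vertex R k *m T + s *: (vertex R k *m S)) <= 1 + s * d.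
  by move=> k; apply: (tangent_norm_le hN smN (vertex_norm k) (g_supp k) (tangent k) d_gt0).
pose s := \big[Num.min/1]_k s0 k.
(* The norm of [T + s S] is attained at a vertex, where it is [<= 1 + s d]. *)
have s_gt0 : 0 < s by apply: lt_bigmin => // k _; apply: s0_gt0.
have : opnorm N (T + s *: S) <= 1 + s * d.
  apply: opnorm_le => x; apply: (cube_bound hN) => k.
  by rewrite mulmxDr -scalemxAr s0_le // s_gt0 bigmin_le.
have l_gt0 : 0 < 1 + s * d by rewrite ltr_wpDr // mulr_ge0 // ltW.
by move/(pairL_le hN G1 l_gt0); rewrite pairLD pairLZ GT lerD2l ler_pM2l.
Qed.

Lemma Jset_annihilated G S : Jset N T G ->
  (forall k, pairL (F k) S = 0) -> pairL G S = 0.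
Proof.
move=> JG FS0; apply/le_anti/andP; split.
  by apply: Jset_pairL_le0 => // k; rewrite -pairL_outer FS0.
rewrite -oppr_le0 -pairLN; apply: Jset_pairL_le0 => // k.
by rewrite mulmxN pairYN -pairL_outer FS0 oppr0.
Qed.

Lemma ksmooth_rank1 : \rank T = 1%N -> ksmooth N T 3.
Proof.
move=> rankT.
have sign k : exists2 s : R, s = 1 \/ s = -1 & g k = s *: g 0.
  apply: (smooth_supporting_sign hN smN (vertex_norm 0) (vertex_norm k) _
    (g_supp 0) (g_supp k)).
  by apply: cross_rank_le1; rewrite rankT.
apply: (@span_dim_annihilator _ _ (fun k : 'I_3 => [:: F 0; F 1; F 2]`_k)).
- by move=> k; have [->|->|->] := ord3P k; apply: F_in_Jset.
- move=> c; rewrite big_ord3 /= !scalemxAr => rel.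
  have := @outer_vertex_rel R 2 (c 0 0 *: g 0) (c 0 1 *: g 1) (c 0 2 *: g 2) 0.
  rewrite mulmx0 addr0 => /(_ rel)[e1 e2 e3].
  have c0 : c 0 0 = 0 by apply: (@scale_g_eq0 0); apply/eqP; rewrite -oppr_eq0 -e3.
  rewrite c0 scale0r oppr0 in e1 e2.
  apply/rowP => i; rewrite mxE.
  by have [->|->|->] := ord3P i; [|apply: (scale_g_eq0 e1)|apply: (scale_g_eq0 e2)].
- move=> G JG S FS0; apply: Jset_annihilated => // k.
  have g0S i : pairL (F i) S = 0 -> pairY (g 0) (vertex R i *m S) = 0.
    have [s s_sign ->] := sign i; rewrite pairL_outer pairZY => /eqP.
    have s_neq0 : s != 0 by case: s_sign => ->; rewrite ?oppr_eq0 oner_eq0.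
    by rewrite mulf_eq0 (negbTE s_neq0) => /eqP.
  have [->|->|->|->] := ord4P k; [exact: (FS0 0)|exact: (FS0 1)|exact: (FS0 2)|].
  have [s _ ->] := sign 3.
  rewrite pairL_outer pairZY vertex3E !mulmxDl mulNmx !pairYD pairYN.
  by rewrite (g0S 0 (FS0 0)) (g0S 1 (FS0 1)) (g0S 2 (FS0 2)) subr0 addr0 mulr0.
Qed.

Lemma vertex_row_parallel k l : strictly_convex N -> g k = l *: g 0 ->
  exists a, vertex R k *m T = a *: (vertex R 0 *m T).
Proof.
move=> scN gk; have := g_supp k; rewrite gk => sg.
have [->|->] :=
  sconvex_supporting_parallel hN scN (vertex_norm 0) (vertex_norm k) (g_supp 0) sg.
  by exists 1; rewrite scale1r.
by exists (-1); rewrite scaleN1r.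
Qed.

Lemma ksmooth_rank2 : strictly_convex N -> \rank T = 2%N -> ksmooth N T 4.
Proof.
move=> scN rankT; apply: (@span_dim_annihilator _ _ (fun k => F k)) => //.
- exact: F_in_Jset.
- move=> c; rewrite big_ord4 !scalemxAr => /outer_vertex_rel[e1 e2 e3].
  have [c0|c0_neq0] := eqVneq (c 0 0) 0.
    rewrite c0 scale0r oppr0 in e1 e2 e3.
    apply/rowP => k; rewrite mxE.
    have [->|->|->|->] := ord4P k;
      [exact: c0|exact: (scale_g_eq0 e1)|exact: (scale_g_eq0 e2)|exact: (scale_g_eq0 e3)].
  have g0_neq0 := supporting_neq0 (g_supp 0).
  have c0N_neq0 : - c 0 0 != 0 by rewrite oppr_eq0.
  rewrite -scaleNr in e1.
  have [a1 row1] := vertex_row_parallel scN (scaler_eq_div c0N_neq0 g0_neq0 e1).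
  have [a2 row2] := vertex_row_parallel scN (scaler_eq_div c0_neq0 g0_neq0 e2).
  by have := rank_le1_of_vertex_rows row1 row2; rewrite rankT.
- by move=> G JG S; apply: Jset_annihilated.
Qed.

End Corollary.

Theorem corollary3p10 (R : realType) (N : 'rV[R]_2 -> R) (T : 'M[R]_(3, 2)) :
  is_norm N -> strictly_convex N -> smooth N ->
  opnorm N T = 1 ->
  (forall x : 'rV[R]_3, (MT N T x /\ ext_ball x) <->
     (x = x1 R \/ x = - x1 R \/ x = x2 R \/ x = - x2 R \/
      x = x3 R \/ x = - x3 R \/ x = x4 R \/ x = - x4 R)) ->
  (\rank T = 1%N -> ksmooth N T 3) /\ (\rank T = 2%N -> ksmooth N T 4).
Proof.
move=> hN scN smN T1 hM.
have vertex_MT k : MT N T (vertex R k).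
  apply: (proj1 ((hM _).2 _)).
  by have [->|->|->|->] := ord4P k; [left|do 2 right; left|do 4 right; left|do 6 right; left].
have vertex_norm k : N (vertex R k *m T) = 1 by rewrite (proj2 (vertex_MT k)) T1.
have /fin_all_exists[g g_supp] k : exists g, supporting N (vertex R k *m T) g.
  exact: (supporting_exists hN (vertex_norm k)).
split=> rankT.
- exact: (ksmooth_rank1 hN smN T1 vertex_norm g_supp rankT).
- exact: (ksmooth_rank2 hN smN T1 vertex_norm g_supp scN rankT).
Qed.
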